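(* Let $G$ be a regular graph and let $H$ be a graph that is not isomorphic to the edgeless graph $\overline{K_n}$ for any odd $n$. Then the lexicographic product $G\circ H$ is a balanced distance magic graph if and only if $H$ is a balanced distance magic graph.
   Context: All graphs are finite and simple. For a graph $G$ and vertex $x$, $N(x)=N_G(x)$ is the (open) neighborhood of $x$. A distance magic labeling of a graph $G$ of order $N$ is a bijection $\ell\colon V(G)\to\{1,\dots,N\}$ for which there is a constant $k$ such that the weight $w(x)=\sum_{y\in N(x)}\ell(y)$ equals $k$ for every $x\in V(G)$. A balanced distance magic labeling of a graph $G$ with an even number $N$ of vertices is a distance magic labeling $\ell$ such that for every $w\in V(G)$: whenever $u\in N(w)$ has $\ell(u)=i$, there is $v\in N(w)$ with $\ell(v)=N+1-i$. The vertices labeled $i$ and $N+1-i$ are called twins. $G$ is a balanced distance magic graph if it has an even number of vertices and admits a balanced distance magic labeling (in particular, an edgeless graph with an even number of vertices is balanced distance magic). The lexicographic product $G\circ H$ has vertex set $V(G)\times V(H)$, with $(g,h)$ adjacent to $(g',h')$ iff either $gg'\in E(G)$, or $g=g'$ and $hh'\in E(H)$. *)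

From mathcomp Require Import all_boot.
Set Implicit Arguments. Unset Strict Implicit. Unset Printing Implicit Defensive.

Definition simple_graph (T : finType) (e : rel T) : Prop :=
  symmetric e /\ irreflexive e.

Definition nbhd (T : finType) (e : rel T) (x : T) : {set T} := [set y | e x y].

Definition regular (T : finType) (e : rel T) : Prop :=
  exists r : nat, forall x : T, #|nbhd e x| = r.

Definition graph_iso (T1 T2 : finType) (e1 : rel T1) (e2 : rel T2) : Prop :=
  exists f : T1 -> T2, bijective f /\ forall x y, e2 (f x) (f y) = e1 x y.

Definition edgeless_graph (n : nat) : rel 'I_n := fun _ _ => false.
Arguments edgeless_graph n : clear implicits.

Definition lexprod (T1 T2 : finType) (e1 : rel T1) (e2 : rel T2) : rel (T1 * T2) :=
  fun p q => e1 p.1 q.1 || ((p.1 == q.1) && e2 p.2 q.2).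

Definition labeling (T : finType) (l : T -> nat) : Prop :=
  injective l /\ (forall x, 1 <= l x <= #|T|) /\
  (forall i, 1 <= i <= #|T| -> exists x, l x = i).

Definition weight (T : finType) (e : rel T) (l : T -> nat) (x : T) : nat :=
  \sum_(y in nbhd e x) l y.

Definition distance_magic_labeling (T : finType) (e : rel T) (l : T -> nat) : Prop :=
  labeling l /\ exists k : nat, forall x : T, weight e l x = k.

Definition balanced_dm_labeling (T : finType) (e : rel T) (l : T -> nat) : Prop :=
  distance_magic_labeling e l /\
  forall w u, u \in nbhd e w ->
    exists2 v, v \in nbhd e w & l v = #|T| + 1 - l u.

Definition balanced_distance_magic (T : finType) (e : rel T) : Prop :=
  ~~ odd #|T| /\ exists l : T -> nat, balanced_dm_labeling e l.

From mathcomp Require Import all_boot zify.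
Set Implicit Arguments. Unset Strict Implicit. Unset Printing Implicit Defensive.

(* The proof rests on a characterization: a graph is balanced distance      *)
(* magic iff it is regular and has a "twin involution", a fixed-point-free  *)
(* involution t under which every neighbourhood is closed.  Given a         *)
(* balanced labeling, t pairs the labels i and |V| + 1 - i; conversely, we  *)
(* label one half of each t-orbit by 1..|V|/2 and its partner by the        *)
(* complementary label, and pairing terms shows that every weight equals    *)
(* (|V| + 1) deg / 2.                                                       *)
(* For G o H, degrees satisfy deg (g, h) = deg g |V(H)| + deg h, so with G  *)
(* regular, G o H is regular iff H is.  A twin involution of H acts on the  *)
(* H-coordinate of G o H.  Conversely, when H has an edge (hence, being     *)
(* regular, no isolated vertex), a twin involution of G o H preserves the   *)
(* G-coordinate and restricts to one of H on any fibre.  When H is          *)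
(* edgeless, the hypothesis makes |V(H)| even, and even edgeless graphs     *)
(* are trivially balanced distance magic.                                   *)

Section TwinInvolutions.

Variable T : finType.
Implicit Types (e : rel T) (t : T -> T) (l : T -> nat).

Definition twin_involution e t : Prop :=
  [/\ involutive t, forall x, t x != x & forall x y, e x (t y) = e x y].

Lemma labeling_of_injective l :
  injective l -> (forall x, 1 <= l x <= #|T|) -> labeling l.
Proof.
move=> l_inj l_range; split=> //; split=> // i i_range.
have l_lt x : (l x).-1 < #|T| by have := l_range x; lia.
pose f x : 'I_#|T| := Ordinal (l_lt x).
have f_inj : injective f.
  move=> x y /(congr1 val) /= eq_l; apply: l_inj.
  by have := l_range x; have := l_range y; lia.
have i_lt : i.-1 < #|T| by lia.
have /codomP [x /(congr1 val) /= eq_i] :=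
  inj_card_onto f_inj (eq_leq (card_ord _)) (Ordinal i_lt).
by exists x; have := l_range x; lia.
Qed.

(* If labels of twins sum to c, a neighbourhood closed under t has weight  *)
(* c/2 times its size: pairing y with t y in the sum.                      *)
Lemma weight_twice e t l c :
  involutive t -> (forall x y, e x (t y) = e x y) ->
  (forall x, l x + l (t x) = c) -> forall w, 2 * weight e l w = c * #|nbhd e w|.
Proof.
move=> tK t_nbhd l_twins w; rewrite /weight.
have reindex : \sum_(y in nbhd e w) l y = \sum_(y in nbhd e w) l (t y).
  rewrite (reindex_inj (can_inj tK)) /=; apply: eq_bigl => y.
  by rewrite !inE t_nbhd.
rewrite mul2n -addnn {2}reindex -big_split /= (eq_bigr (fun _ => c)) //.
by rewrite sum_nat_const mulnC.
Qed.

Lemma labeling_twins l : labeling l -> ~~ odd #|T| ->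
  exists t, [/\ involutive t, forall x, t x != x & forall x, l (t x) = #|T|.+1 - l x].
Proof.
move=> [l_inj [l_range l_onto]] even_T.
pose t x := odflt x [pick y | l y == #|T|.+1 - l x].
have lt x : l (t x) = #|T|.+1 - l x.
  rewrite /t; case: pickP => [y /eqP //|no_twin].
  have [|y ly] := l_onto (#|T|.+1 - l x); first by have := l_range x; lia.
  by have := no_twin y; rewrite ly eqxx.
exists t; split=> // x; first by apply: l_inj; rewrite !lt; have := l_range x; lia.
apply/eqP => tx_x; have := lt x; rewrite tx_x => lx.
have T_double : #|T|.+1 = (l x).*2 by lia.
by move: (odd_double (l x)); rewrite -T_double /= even_T.
Qed.

Lemma involution_halves t : involutive t -> (forall x, t x != x) ->
  exists S : {set T}, forall x, (t x \in S) = (x \notin S).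
Proof.
move=> tK t_fixfree; exists [set x | enum_rank x < enum_rank (t x)] => x.
have ranks_neq : (enum_rank x : nat) <> enum_rank (t x).
  by move=> /val_inj /enum_rank_inj x_tx; move: (t_fixfree x); rewrite -x_tx eqxx.
by rewrite !inE tK; apply/idP/idP; lia.
Qed.

(* Such a set S is exactly half of T, t being a bijection S -> T \ S. *)
Lemma card_halves t (S : {set T}) : involutive t ->
  (forall x, (t x \in S) = (x \notin S)) -> #|S|.*2 = #|T|.
Proof.
move=> tK tS; have card_compl : #|~: S| = #|S|.
  rewrite -(card_preimset S (can_inj tK)); apply: eq_card => x.
  by rewrite in_setC -tS !inE.
by rewrite -addnn -{2}card_compl cardsC.
Qed.

Lemma set_numbering (S : {set T}) :
  exists c : T -> nat, (forall x, x \in S -> 1 <= c x <= #|S|) /\ {in S &, injective c}.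
Proof.
exists (fun x => (index x (enum S)).+1); split=> [x|x y xS yS [idx]].
  by rewrite -mem_enum -index_mem cardE => ->.
rewrite -mem_enum in xS; rewrite -mem_enum in yS.
by rewrite -(nth_index x xS) -(nth_index x yS) idx.
Qed.

(* Conversely, every fixed-point-free involution is the twin map of some    *)
(* labeling: number one half S of T by 1..|S| and give t x the label        *)
(* |T| + 1 - l x.                                                           *)
Lemma twin_labeling t : involutive t -> (forall x, t x != x) ->
  exists2 l, labeling l & forall x, l x + l (t x) = #|T|.+1.
Proof.
move=> tK t_fixfree; have [S tS] := involution_halves tK t_fixfree.
have card_T : #|T| = #|S| + #|S| by rewrite addnn (card_halves tK tS).
have [c [c_range c_inj]] := set_numbering S.
pose l x := if x \in S then c x else #|T|.+1 - c (t x).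
have l_in x : x \in S -> l x = c x by rewrite /l => ->.
have l_out x : x \notin S -> l x = #|T|.+1 - c (t x) by rewrite /l => /negbTE ->.
clearbody l.
have l_twins x : l x + l (t x) = #|T|.+1.
  case xS: (x \in S).
  - by rewrite (l_in _ xS) l_out ?tK ?tS ?xS //; have := c_range x xS; lia.
  - have txS : t x \in S by rewrite tS xS.
    by rewrite (l_in _ txS) l_out ?xS //; have := c_range _ txS; lia.
have l_low x : x \in S -> 1 <= l x <= #|S| by move=> xS; rewrite l_in //; exact: c_range.
have l_high x : x \notin S -> #|S| < l x <= #|T|.
  move=> xS; have txS : t x \in S by rewrite tS.
  by rewrite l_out //; have := c_range _ txS; lia.
exists l => //; apply: labeling_of_injective => [x y l_xy|x].
  case xS: (x \in S); case yS: (y \in S).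
  - by apply: c_inj; rewrite // -!l_in.
  - by have := l_low x xS; have := l_high y; rewrite yS l_xy => /(_ isT); lia.
  - by have := l_low y yS; have := l_high x; rewrite xS -l_xy => /(_ isT); lia.
  - have [txS tyS] : t x \in S /\ t y \in S by rewrite !tS xS yS.
    apply: (can_inj tK); apply: c_inj => //; move: l_xy.
    by rewrite !l_out ?xS ?yS //; have := c_range _ txS; have := c_range _ tyS; lia.
case xS: (x \in S); first by have := l_low x xS; lia.
by have := l_high x; rewrite xS => /(_ isT); lia.
Qed.

(* A balanced distance magic graph is regular and has a twin involution:   *)
(* the twin map of the labeling preserves neighbourhoods by balancedness,   *)
(* and then 2 w(x) = (|T| + 1) deg(x) forces a constant degree.             *)
Lemma bdm_regular_twins e :
  balanced_distance_magic e -> regular e /\ exists t, twin_involution e t.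
Proof.
move=> [even_T [l [[l_lab [k l_magic]] l_bal]]].
have [t [tK t_fixfree lt]] := labeling_twins l_lab even_T.
have [l_inj [l_range _]] := l_lab.
have t_closed x y : e x y -> e x (t y).
  move=> exy; have [|v] := l_bal x y; first by rewrite inE.
  by rewrite inE addn1 -lt => exv /l_inj <-.
have t_nbhd x y : e x (t y) = e x y.
  by apply/idP/idP => [/t_closed|]; [rewrite tK | exact: t_closed].
have l_twins x : l x + l (t x) = #|T|.+1 by rewrite lt; have := l_range x; lia.
split; last by exists t.
exists ((2 * k) %/ #|T|.+1) => x.
by rewrite -(l_magic x) (weight_twice tK t_nbhd l_twins) mulKn.
Qed.

(* Conversely a regular graph with a twin involution is balanced distance  *)
(* magic: label it by twin_labeling; every weight is (|T| + 1) r / 2.      *)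
Lemma bdm_of_regular_twins e :
  regular e -> (exists t, twin_involution e t) -> balanced_distance_magic e.
Proof.
move=> [r e_reg] [t [tK t_fixfree t_nbhd]].
have [S tS] := involution_halves tK t_fixfree.
split; first by rewrite -(card_halves tK tS) odd_double.
have [l l_lab l_twins] := twin_labeling tK t_fixfree.
exists l; split.
  split=> //; exists (#|T|.+1 * r)./2 => w.
  by rewrite -(e_reg w) -(weight_twice tK t_nbhd l_twins) mul2n doubleK.
move=> w u u_nbhd; exists (t u); first by rewrite inE t_nbhd -inE.
by have := l_twins u; lia.
Qed.

(* An edgeless graph on an even number of vertices is balanced distance    *)
(* magic: every labeling works, all weights being 0.                       *)
Lemma edgeless_bdm e :
  (forall x y, e x y = false) -> ~~ odd #|T| -> balanced_distance_magic e.
Proof.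
move=> no_edge even_T; split=> //; exists (fun x => (enum_rank x).+1).
split; last by move=> w u; rewrite inE no_edge.
split; last by exists 0 => x; rewrite /weight big_pred0 // => y; rewrite inE no_edge.
apply: labeling_of_injective => [x y [/val_inj /enum_rank_inj] //|x].
by rewrite /= ltn_ord.
Qed.

Lemma regular_no_isolated e x0 y0 :
  regular e -> e x0 y0 -> forall x, exists y, e x y.
Proof.
move=> [r e_reg] e0 x; have : 0 < #|nbhd e x|.
  by rewrite e_reg -(e_reg x0); apply/card_gt0P; exists y0; rewrite inE.
by case/card_gt0P => y; rewrite inE; exists y.
Qed.

End TwinInvolutions.

Section LexicographicProduct.

Variables (T1 T2 : finType) (eG : rel T1) (eH : rel T2).
Hypotheses (eG_sym : symmetric eG) (eG_irr : irreflexive eG) (eH_irr : irreflexive eH).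

Local Notation eGH := (lexprod eG eH).

(* N((g,h)) is N(g) x V(H) together with {g} x N(h), a disjoint union. *)
Lemma degree_lexprod g h :
  #|nbhd eGH (g, h)| = #|nbhd eG g| * #|T2| + #|nbhd eH h|.
Proof.
have -> : nbhd eGH (g, h) = setX (nbhd eG g) [set: T2] :|: setX [set g] (nbhd eH h).
  by apply/setP => [[a b]]; rewrite !inE /lexprod /= andbT (eq_sym a).
rewrite cardsU !cardsX cards1 cardsT mul1n.
suff -> : setX (nbhd eG g) [set: T2] :&: setX [set g] (nbhd eH h) = set0.
  by rewrite cards0 subn0.
by apply/setP => [[a b]]; rewrite !inE; case: eqP => [->|]; rewrite ?eG_irr ?andbF.
Qed.

Lemma regular_lexprod : regular eG -> regular eH -> regular eGH.
Proof.
move=> [rG G_reg] [rH H_reg]; exists (rG * #|T2| + rH) => [[g h]].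
by rewrite degree_lexprod G_reg H_reg.
Qed.

(* Since G is regular, the degree of (g0, h) in G o H determines that of h. *)
Lemma regular_lexprod_factor (g0 : T1) : regular eG -> regular eGH -> regular eH.
Proof.
move=> [rG G_reg] [r GH_reg]; exists (r - rG * #|T2|) => h.
by have := GH_reg (g0, h); rewrite degree_lexprod G_reg; lia.
Qed.

Lemma twins_lexprod t :
  twin_involution eH t -> twin_involution eGH (fun p => (p.1, t p.2)).
Proof.
move=> [tK t_fixfree t_nbhd]; split.
- by move=> [g h] /=; rewrite tK.
- by move=> [g h]; rewrite /= xpair_eqE eqxx (negbTE (t_fixfree h)).
- by move=> [a b] [c d]; rewrite /lexprod /= t_nbhd.
Qed.

Section Fibres.

Variable t : T1 * T2 -> T1 * T2.
Hypotheses (t_twins : twin_involution eGH t) (H_no_isolated : forall h, exists h', eH h' h).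

(* If H has no isolated vertex, twins in G o H lie in the same H-fibre.    *)
(* Say t (g, h) = (g', h') with g' <> g.  Neighbourhoods are t-closed, so  *)
(* a neighbour (g, h1) of (g, h) is adjacent to (g', h'), whence g ~ g';    *)
(* but then (g', h') ~ (g, h), so (g', h') ~ t (g, h) = (g', h'): a loop.   *)
Lemma twin_lexprod_fst g h : (t (g, h)).1 = g.
Proof.
have [_ _ t_nbhd] := t_twins; have [h1 h1h] := H_no_isolated h.
case E : (t (g, h)) => [g' h'] /=; apply/eqP; apply/negP => /negP g'g.
have gg' : eG g g'.
  have := t_nbhd (g, h1) (g, h); rewrite E /lexprod /= eG_irr eqxx h1h /=.
  by rewrite eq_sym (negbTE g'g) orbF.
have := t_nbhd (g', h') (g, h).
by rewrite E /lexprod /= eG_irr eH_irr eG_sym gg' eqxx andbF.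
Qed.

Lemma twins_lexprod_fibre g : twin_involution eH (fun h => (t (g, h)).2).
Proof.
have [tK t_fixfree t_nbhd] := t_twins.
have tE h : t (g, h) = (g, (t (g, h)).2).
  by move: (twin_lexprod_fst g h); case: (t (g, h)) => a b /= ->.
split.
- by move=> h; rewrite -tE tK.
- move=> h; apply/eqP => fixed; move: (t_fixfree (g, h)).
  by rewrite tE fixed eqxx.
- move=> x y; have := t_nbhd (g, x) (g, y).
  by rewrite tE /lexprod /= eG_irr eqxx.
Qed.

End Fibres.

End LexicographicProduct.

(* An edgeless graph not isomorphic to an odd edgeless graph has an even   *)
(* number of vertices, enum_rank being an isomorphism onto edgeless_graph. *)
Lemma edgeless_even (T : finType) (e : rel T) :
  (forall x y, e x y = false) ->
  ~ (exists n : nat, odd n /\ graph_iso e (edgeless_graph n)) -> ~~ odd #|T|.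
Proof.
move=> no_edge not_odd_edgeless; apply/negP => odd_T; apply: not_odd_edgeless.
exists #|T|; split=> //; exists enum_rank; split=> //.
exact: Bijective (@enum_rankK T) (@enum_valK T).
Qed.

Theorem mainTheorem3 (T1 T2 : finType) (eG : rel T1) (eH : rel T2) :
  simple_graph eG -> simple_graph eH ->
  0 < #|T1| ->
  regular eG ->
  ~ (exists n : nat, odd n /\ graph_iso eH (edgeless_graph n)) ->
  balanced_distance_magic (lexprod eG eH) <-> balanced_distance_magic eH.
Proof.
move=> [eG_sym eG_irr] [eH_sym eH_irr] /card_gt0P [g0 _] G_reg not_odd_edgeless.
split=> [|/bdm_regular_twins [H_reg [t t_twins]]]; last first.
  apply: bdm_of_regular_twins; first exact: regular_lexprod.
  by exists (fun p => (p.1, t p.2)); apply: twins_lexprod.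
move=> /bdm_regular_twins [GH_reg [t t_twins]].
have H_reg := regular_lexprod_factor eG_irr g0 G_reg GH_reg.
case: (pickP (fun p : T2 * T2 => eH p.1 p.2)) => [[x0 y0] e0 | no_edge].
  apply: bdm_of_regular_twins => //; exists (fun h => (t (g0, h)).2).
  apply: twins_lexprod_fibre => // h.
  by have [h' hh'] := regular_no_isolated H_reg e0 h; exists h'; rewrite eH_sym.
have no_edge' x y : eH x y = false by exact: no_edge (x, y).
exact: edgeless_bdm no_edge' (edgeless_even no_edge' not_odd_edgeless).
Qed.
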